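(* Consider the reaction network (BI)+(BII) on the twelve species $\mathrm{NE}_i,\mathrm{NI}_i,\mathrm{N}_i,\mathrm{D}_i,\mathrm{T}_i,\mathrm{C}_i$ ($i=1,2$) with the irreversible reactions \[ \begin{aligned} &11:\ \mathrm{NI}_1+\mathrm{NE}_1\to \mathrm{N}_1, && 21:\ \mathrm{NI}_2+\mathrm{NE}_2\to \mathrm{N}_2,\\ &12:\ \mathrm{N}_1+\mathrm{D}_2\to \mathrm{NI}_1+\mathrm{T}_2, && 22:\ \mathrm{N}_2+\mathrm{D}_1\to \mathrm{NI}_2+\mathrm{T}_1,\\ &13:\ \mathrm{T}_1\to \mathrm{NE}_1+\mathrm{D}_1, && 23:\ \mathrm{T}_2\to \mathrm{NE}_2+\mathrm{D}_2,\\ &14:\ \mathrm{N}_1+\mathrm{D}_1\to \mathrm{C}_1, && 24:\ \mathrm{N}_2+\mathrm{D}_2\to \mathrm{C}_2,\\ &15:\ \mathrm{C}_1\to \mathrm{N}_1+\mathrm{D}_1, && 25:\ \mathrm{C}_2\to \mathrm{N}_2+\mathrm{D}_2, \end{aligned} \] and the associated ODE system \[ \begin{cases} [\dot{\mathrm{NE}}_1]=-r_{11}([\mathrm{NI}_1],[\mathrm{NE}_1])+r_{13}([\mathrm{T}_1]),\\ [\dot{\mathrm{NI}}_1]=r_{12}([\mathrm{N}_1],[\mathrm{D}_2])-r_{11}([\mathrm{NI}_1],[\mathrm{NE}_1]),\\ [\dot{\mathrm{N}}_1]=-r_{12}([\mathrm{N}_1],[\mathrm{D}_2])+r_{11}([\mathrm{NI}_1],[\mathrm{NE}_1])+r_{15}([\mathrm{C}_1])-r_{14}([\mathrm{N}_1],[\mathrm{D}_1]),\\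 [\dot{\mathrm{D}}_1]=r_{13}([\mathrm{T}_1])-r_{22}([\mathrm{N}_2],[\mathrm{D}_1])+r_{15}([\mathrm{C}_1])-r_{14}([\mathrm{N}_1],[\mathrm{D}_1]),\\ [\dot{\mathrm{T}}_1]=-r_{13}([\mathrm{T}_1])+r_{22}([\mathrm{N}_2],[\mathrm{D}_1]),\\ [\dot{\mathrm{C}}_1]=-r_{15}([\mathrm{C}_1])+r_{14}([\mathrm{N}_1],[\mathrm{D}_1]),\\ [\dot{\mathrm{NE}}_2]=-r_{21}([\mathrm{NI}_2],[\mathrm{NE}_2])+r_{23}([\mathrm{T}_2]),\\ [\dot{\mathrm{NI}}_2]=r_{22}([\mathrm{N}_2],[\mathrm{D}_1])-r_{21}([\mathrm{NI}_2],[\mathrm{NE}_2]),\\ [\dot{\mathrm{N}}_2]=-r_{22}([\mathrm{N}_2],[\mathrm{D}_1])+r_{21}([\mathrm{NI}_2],[\mathrm{NE}_2])+r_{25}([\mathrm{C}_2])-r_{24}([\mathrm{N}_2],[\mathrm{D}_2]),\\ [\dot{\mathrm{D}}_2]=-r_{12}([\mathrm{N}_1],[\mathrm{D}_2])+r_{23}([\mathrm{T}_2])+r_{25}([\mathrm{C}_2])-r_{24}([\mathrm{N}_2],[\mathrm{D}_2]),\\ [\dot{\mathrm{T}}_2]=r_{12}([\mathrm{N}_1],[\mathrm{D}_2])-r_{23}([\mathrm{T}_2]),\\ [\dot{\mathrm{C}}_2]=-r_{25}([\mathrm{C}_2])+r_{24}([\mathrm{N}_2],[\mathrm{D}_2]),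 \end{cases} \] with the kinetic symmetry constraints $r_{1k}\equiv r_{2k}$ for $k=1,2,3,4,5$. Then the system has the capacity for zero-eigenvalue bifurcations and thus for differentiation. Moreover, up to the symmetry swapping the cell indices $1\leftrightarrow2$, there are exactly three instability motifs associated to unstable-positive feedbacks, namely, for $(j,k)=(1,2)$ and $(j,k)=(2,1)$: (a) species $\{\mathrm{NI}_j,\mathrm{N}_j,\mathrm{D}_j,\mathrm{N}_k,\mathrm{D}_k\}$ with reactions $\{j1,j2,j4,k2,k4\}$; (b) species $\{\mathrm{T}_j,\mathrm{D}_j,\mathrm{N}_j,\mathrm{N}_k,\mathrm{D}_k\}$ with reactions $\{j2,j3,j4,k2,k4\}$; (c) species $\{\mathrm{NI}_j,\mathrm{N}_j,\mathrm{D}_j,\mathrm{NE}_k,\mathrm{N}_k,\mathrm{T}_k\}$ with reactions $\{j1,j2,j4,k1,k2,k3\}$. All three motifs identify non-autocatalytic positive feedback, and the network (BI)+(BII) is non-autocatalytic.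
   Context: General setting. A reaction network has species $X_1,\dots,X_M$ and irreversible reactions $j:\ \sum_m s^j_m X_m\to\sum_m \tilde s^j_m X_m$ with nonnegative stoichiometric coefficients; $X_m$ is a reactant of $j$ if $s^j_m>0$. The stoichiometric matrix is $S_{mj}=\tilde s^j_m-s^j_m$; the ODE system is $\dot x=S\mathbf r(x)$ with rates $r_j$ that are monotone chemical: (i) $r_j\ge0$ on $\mathbb R^M_{\ge0}$; (ii) $r_j(x)>0$ iff $x_m>0$ for all reactants $X_m$ of $j$; (iii) $\partial r_j/\partial x_m\equiv0$ if $X_m$ is not a reactant of $j$; (iv) $\partial r_j/\partial x_m>0$ for $x>0$ and $X_m$ a reactant of $j$. Kinetics are assumed parameter-rich: at any positive steady state the partial derivatives $\partial r_j/\partial x_m$ (for reactants) can be prescribed as arbitrary positive numbers. Symbolic analysis: $R$ is the symbolic reactivity matrix ($R_{jm}=r_{jm}>0$ a symbol if $X_m$ is a reactant of $j$, else $0$), $G=SR$ the symbolic Jacobian, $n=\dim\ker S^T$, and $a_{M-n}$ the sum of the principal minors of order $M-n$ of $G$ (for a nondegenerate network, the determinant of the Jacobian restricted to a stoichiometric compatibility class $(x_0+\operatorname{Im}S)\cap\mathbb R^M_{>0}$). The network has the capacity for zero-eigenvalue bifurcation (differentiation) if there exist positive symbol values with $a_{M-n}=0$ satisfying kinetic symmetry at a homogeneous steady state, i.e. $r_{jm}=r_{\sigma(j)\sigma(m)}$ where $\sigma$ swaps cell indices $1\leftrightarrow2$ of reactions and species. A $k$-Child-Selection (CS) triple $(\kappa,E_\kappa,J)$: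 $k$ species $\kappa$, $k$ reactions $E_\kappa$, bijection $J:\kappa\to E_\kappa$ with each $X_m\in\kappa$ a reactant of $J(X_m)$; its CS-matrix is $S[\kappa]_{ml}=S_{m,J(X_l)}$, $X_m,X_l\in\kappa$. An unstable-positive feedback is a $k\times k$ CS-matrix with $\operatorname{sign}\det S[\kappa]=(-1)^{k-1}$ such that no principal $k'\times k'$ submatrix, $k'<k$, has determinant of sign $(-1)^{k'-1}$. Its instability motif is the subnetwork with species $\kappa$ and reactions $E_\kappa$ (species outside $\kappa$ are disregarded). An unstable-positive feedback is autocatalytic if it is a Metzler matrix (nonnegative off-diagonal entries); a network is autocatalytic if it has an autocatalytic unstable-positive feedback, non-autocatalytic otherwise. Reaction labels $jk$ denote reaction number $k$ of cell $j$ in the list above. *)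

From HB Require Import structures.
From mathcomp Require Import all_boot all_order all_algebra.
From mathcomp Require Export reals.
Set Implicit Arguments. Unset Strict Implicit. Unset Printing Implicit Defensive.
Import Order.TTheory GRing.Theory Num.Theory.
Local Open Scope ring_scope.

Record network (M Jn : nat) := Network {
  sreac : 'I_M -> 'I_Jn -> nat;
  sprod : 'I_M -> 'I_Jn -> nat }.

Section General.
Variables (M Jn : nat).
Implicit Types (N : network M Jn).

Definition reactant N (m : 'I_M) (j : 'I_Jn) : bool := (0 < sreac N m j)%N.

Definition stoich N : 'M[int]_(M, Jn) :=
  \matrix_(m, j) ((sprod N m j)%:Z - (sreac N m j)%:Z).

(* symbolic reactivity matrix, evaluated at values r j m of the symbols r_{jm} *)
Definition reactivity (R : numDomainType) N (r : 'I_Jn -> 'I_M -> R) : 'M[R]_(Jn, M) :=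
  \matrix_(j, m) (if reactant N m j then r j m else 0).

Definition sjacobian (R : numDomainType) N (r : 'I_Jn -> 'I_M -> R) : 'M[R]_M :=
  map_mx intr (stoich N) *m reactivity N r.

(* n = dim ker S^T ; kermx A spans {u | u *m A = 0}, i.e. ker A^T (transposed) *)
Definition cons_dim (R : fieldType) N : nat :=
  \rank (kermx (map_mx intr (stoich N) : 'M[R]_(M, Jn))).

End General.

Definition principal_submx (R : Type) (n : nat) (A : 'M[R]_n) (B : {set 'I_n})
  : 'M[R]_#|B| := \matrix_(i, j) A (enum_val i) (enum_val j).

Definition sum_pminors (R : comRingType) (n : nat) (A : 'M[R]_n) (k : nat) : R :=
  \sum_(B : {set 'I_n} | #|B| == k) \det (principal_submx A B).

Definition a_coef (R : realFieldType) (M Jn : nat) (N : network M Jn)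
  (r : 'I_Jn -> 'I_M -> R) : R :=
  sum_pminors (sjacobian N r) (M - cons_dim R N).

Definition capacity_zero_eig (R : realFieldType) (M Jn : nat) (N : network M Jn)
  (sigs : 'I_M -> 'I_M) (sigr : 'I_Jn -> 'I_Jn) : Prop :=
  exists r : 'I_Jn -> 'I_M -> R,
    (forall j m, reactant N m j -> 0 < r j m) /\
    (forall j m, reactant N m j -> r j m = r (sigr j) (sigs m)) /\
    a_coef N r = 0.

(* Child-Selection triple: kappa enumerated by kap : 'I_k -> species,
   E_kappa enumerated by Jf : 'I_k -> reactions, J(kap i) = Jf i *)
Definition is_cs (M Jn k : nat) (N : network M Jn)
  (kap : 'I_k -> 'I_M) (Jf : 'I_k -> 'I_Jn) : Prop :=
  injective kap /\ injective Jf /\ (forall i, reactant N (kap i) (Jf i)).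

Definition cs_matrix (M Jn k : nat) (N : network M Jn)
  (kap : 'I_k -> 'I_M) (Jf : 'I_k -> 'I_Jn) : 'M[int]_k :=
  \matrix_(i, l) stoich N (kap i) (Jf l).

Definition unstable_positive (k : nat) (A : 'M[int]_k) : Prop :=
  (0 < k)%N /\
  Num.sg (\det A) = (-1) ^+ k.-1 /\
  (forall B : {set 'I_k}, (0 < #|B| < k)%N ->
     Num.sg (\det (principal_submx A B)) != (-1) ^+ (#|B|.-1)).

Definition metzler (k : nat) (A : 'M[int]_k) : Prop :=
  forall i j : 'I_k, i != j -> 0 <= A i j.

Definition motif (M Jn k : nat) (kap : 'I_k -> 'I_M) (Jf : 'I_k -> 'I_Jn)
  : {set 'I_M} * {set 'I_Jn} :=
  ([set kap i | i : 'I_k], [set Jf i | i : 'I_k]).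

Definition autocatalytic_network (M Jn : nat) (N : network M Jn) : Prop :=
  exists (k : nat) (kap : 'I_k -> 'I_M) (Jf : 'I_k -> 'I_Jn),
    is_cs N kap Jf /\ unstable_positive (cs_matrix N kap Jf) /\
    metzler (cs_matrix N kap Jf).

(* species: cell c in {0,1} (paper's cells 1,2), type t:
   NE=0, NI=1, N=2, D=3, T=4, C=5; index 6*c + t.
   reactions: reaction number i in 1..5 of cell c has index 5*c + (i-1). *)

Definition NE := 0%N. Definition NI := 1%N. Definition Nn := 2%N.
Definition D := 3%N. Definition T := 4%N. Definition C := 5%N.

Definition sp (c t : nat) : 'I_12 := inord (6 * c + t).
Definition rx (c i : nat) : 'I_10 := inord (5 * c + i.-1).

Definition bn_reac : seq (seq nat) :=
  [:: [:: 1; 0]; [:: 2; 9]; [:: 4]; [:: 2; 3]; [:: 5];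
      [:: 7; 6]; [:: 8; 3]; [:: 10]; [:: 8; 9]; [:: 11]]%N.
Definition bn_prod : seq (seq nat) :=
  [:: [:: 2]; [:: 1; 10]; [:: 0; 3]; [:: 5]; [:: 2; 3];
      [:: 8]; [:: 7; 4]; [:: 6; 9]; [:: 11]; [:: 8; 9]]%N.

Definition notch_net : network 12 10 :=
  Network (fun m j => count_mem (m : nat) (nth [::] bn_reac j))
          (fun m j => count_mem (m : nat) (nth [::] bn_prod j)).

Definition swap_sp (m : 'I_12) : 'I_12 := inord ((m + 6) %% 12).
Definition swap_rx (j : 'I_10) : 'I_10 := inord ((j + 5) %% 10).

Definition motif_a (c d : nat) : {set 'I_12} * {set 'I_10} :=
  ([set sp c NI; sp c Nn; sp c D; sp d Nn; sp d D],
   [set rx c 1; rx c 2; rx c 4; rx d 2; rx d 4]).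
Definition motif_b (c d : nat) : {set 'I_12} * {set 'I_10} :=
  ([set sp c T; sp c D; sp c Nn; sp d Nn; sp d D],
   [set rx c 2; rx c 3; rx c 4; rx d 2; rx d 4]).
Definition motif_c (c d : nat) : {set 'I_12} * {set 'I_10} :=
  ([set sp c NI; sp c Nn; sp c D; sp d NE; sp d Nn; sp d T],
   [set rx c 1; rx c 2; rx c 4; rx d 1; rx d 2; rx d 3]).

(* (j,k) = (1,2) is (c,d) = (0,1); (j,k) = (2,1) is (c,d) = (1,0) *)
Definition notch_motifs : seq ({set 'I_12} * {set 'I_10}) :=
  [:: motif_a 0 1; motif_b 0 1; motif_c 0 1;
      motif_a 1 0; motif_b 1 0; motif_c 1 0]%N.

From HB Require Import structures.
From mathcomp Require Import all_boot all_order all_algebra.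
From mathcomp Require Import reals.
From mathcomp Require Import ssrZ.
Import Order.TTheory GRing.Theory Num.Theory.
Local Open Scope ring_scope.

(* All claims are finite computations on the 12 x 10 stoichiometric matrix S.
   The left kernel of S has dimension 5 (five conservation laws, and S has a
   nonsingular 7 x 7 minor), so a_{M-n} is the sum a_7 of the 792 principal
   7 x 7 minors of the symbolic Jacobian; it vanishes at explicit positive,
   kinetically symmetric values of the symbols.
   A CS triple is determined by its list of pairs (X_m, J(X_m)) up to a
   simultaneous permutation of the rows and columns of its CS-matrix, and the
   motif as well as the unstable-positive and Metzler properties are invariant
   under such permutations. It thus suffices to enumerate the pair lists with
   increasing reactions and to evaluate the signs of all their principal
   minors: exactly six of them are unstable-positive, one for each motif of
   the statement, and none of these is Metzler. *)

(** * Subsequences and subsets of ordinals *)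

Fixpoint subseqs {T : Type} (s : seq T) : seq (seq T) :=
  if s is x :: s' then subseqs s' ++ map (cons x) (subseqs s') else [:: [::]].

Lemma mem_subseqs (T : eqType) (s t : seq T) : (t \in subseqs s) = subseq t s.
Proof.
elim: s t => [|x s IH] t /=; first by rewrite inE; case: t.
rewrite mem_cat IH; case: t => [|y t] /=; first by rewrite sub0seq.
case: eqVneq => [->|yx].
  rewrite mem_map; last by move=> a b [].
  by rewrite IH orb_idl // => /(subseq_trans (subseq_cons t x)).
have /negbTE-> : y :: t \notin map (cons x) (subseqs s).
  by apply/mapP => -[u _ [yx']]; rewrite yx' eqxx in yx.
by rewrite orbF.
Qed.

Lemma subseqs_uniq (T : eqType) (s : seq T) : uniq s -> uniq (subseqs s).
Proof.
elim: s => [|x s IH] //= /andP[xs us].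
rewrite cat_uniq IH // map_inj_uniq ?IH // ?andbT; last by move=> a b [].
apply/hasPn => t /mapP[u _ ->]; rewrite mem_subseqs.
by apply: contra xs => /mem_subseq; apply; rewrite mem_head.
Qed.

Definition seq_of_set {n} (B : {set 'I_n}) : seq nat := [seq val i | i <- enum B].

Definition set_of_seq n (s : seq nat) : {set 'I_n} := [set i : 'I_n | val i \in s].

Lemma seq_of_setE n (B : {set 'I_n}) :
  seq_of_set B = [seq val i | i <- enum 'I_n & i \in B].
Proof. by rewrite /seq_of_set enumT. Qed.

Lemma seq_of_set_subseq n (B : {set 'I_n}) : subseq (seq_of_set B) (iota 0 n).
Proof. by rewrite seq_of_setE -val_enum_ord map_subseq ?filter_subseq. Qed.

Lemma set_of_seqK n (s : seq nat) :
  seq_of_set (set_of_seq n s) = [seq i <- iota 0 n | i \in s].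
Proof.
rewrite seq_of_setE -val_enum_ord [in RHS]filter_map; congr map.
by apply: eq_filter => i; rewrite /= inE.
Qed.

Lemma seq_of_setK n : cancel (@seq_of_set n) (set_of_seq n).
Proof.
move=> B; apply/setP => i; rewrite inE /seq_of_set mem_map ?mem_enum //.
exact: val_inj.
Qed.

Lemma perm_seq_of_set n :
  perm_eq (map (@seq_of_set n) (enum {set 'I_n})) (subseqs (iota 0 n)).
Proof.
apply: uniq_perm; first by rewrite map_inj_uniq ?enum_uniq //; apply: can_inj (@seq_of_setK n).
  exact/subseqs_uniq/iota_uniq.
move=> s; rewrite mem_subseqs; apply/mapP/idP => [[B _ ->]|sub_s].
  exact: seq_of_set_subseq.
exists (set_of_seq n s); rewrite ?mem_enum // set_of_seqK.
by move/(subseq_uniqP (iota_uniq 0 n)): sub_s.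
Qed.

Lemma big_set_subseqs {R : nmodType} {n} (P : pred nat) (F : seq nat -> R) :
  \sum_(B : {set 'I_n} | P #|B|) F (seq_of_set B) =
  \sum_(s <- subseqs (iota 0 n) | P (size s)) F s.
Proof.
rewrite -(perm_big _ (perm_seq_of_set n)) big_map big_enum_cond.
by apply: eq_bigl => B; rewrite size_map -cardE.
Qed.

Lemma sort_subseq_iota (s : seq nat) n :
  uniq s -> all (fun x => x < n)%N s -> subseq (sort leq s) (iota 0 n).
Proof.
move=> s_uniq s_lt.
have /(perm_sortP leq_total leq_trans anti_leq)-> : perm_eq s [seq x <- iota 0 n | x \in s].
  apply: uniq_perm; rewrite ?filter_uniq ?iota_uniq // => x.
  by rewrite mem_filter mem_iota /=; case xs: (x \in s); rewrite // (allP s_lt).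
rewrite sorted_sort ?filter_subseq //; first exact: leq_trans.
exact/sorted_filter/iota_sorted/leq_trans.
Qed.

(** * Determinants, minors and ranks by evaluation *)

Lemma big_ord_iota {R : Type} {idx : R} {op : R -> R -> R} {n} (F : nat -> R) :
  \big[op/idx]_(i < n) F i = \big[op/idx]_(i <- iota 0 n) F i.
Proof. by rewrite -(big_mkord xpredT F) /index_iota subn0. Qed.

(* Zero entries are skipped: the matrices evaluated below are sparse. *)
Fixpoint detf {R : nzRingType} (n : nat) (f : nat -> nat -> R) : R :=
  if n is n'.+1 then
    foldr (fun j acc => if f 0%N j == 0 then acc else
             (-1) ^+ j * f 0%N j * detf n' (fun i k => f i.+1 (bump j k)) + acc)
          0 (iota 0 n)
  else 1.

Lemma detfS (R : nzRingType) n (f : nat -> nat -> R) :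
  detf n.+1 f =
  \sum_(j < n.+1) (-1) ^+ j * f 0%N j * detf n (fun i k => f i.+1 (bump j k)).
Proof.
pose F j := (-1) ^+ j * f 0%N j * detf n (fun i k => f i.+1 (bump j k)).
rewrite (big_ord_iota F).
have foldrE s :
    foldr (fun j acc => if f 0%N j == 0 then acc else F j + acc) 0 s = \sum_(j <- s) F j.
  elim: s => [|j s IHs] /=; rewrite ?big_nil ?big_cons // IHs /F.
  by case: eqP => [->|_]; rewrite ?mulr0 ?mul0r ?add0r.
exact: foldrE.
Qed.

Lemma det_detf {R : comNzRingType} {n} (A : 'M[R]_n) (f : nat -> nat -> R) :
  (forall i j : 'I_n, A i j = f i j) -> \det A = detf n f.
Proof.
elim: n A f => [|n IH] A f Af; first by rewrite det_mx00.
rewrite (expand_det_row _ ord0) detfS; apply: eq_bigr => j _.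
rewrite Af /cofactor add0n mulrCA mulrA.
by congr (_ * _); apply: IH => i k; rewrite !mxE Af.
Qed.

Definition minorf {R : nzRingType} (f : nat -> nat -> R) (rows cols : seq nat) : R :=
  detf (size rows) (fun a b => f (nth 0%N rows a) (nth 0%N cols b)).

Lemma det_mxsub_minorf {R : comNzRingType} {m n p} {A : 'M[R]_(m, n)}
    {a : nat -> nat -> R} (f : 'I_p -> 'I_m) (g : 'I_p -> 'I_n) rows cols :
  (forall i j, A i j = a i j) -> size rows = p ->
  (forall i, val (f i) = nth 0%N rows i) -> (forall j, val (g j) = nth 0%N cols j) ->
  \det (mxsub f g A) = minorf a rows cols.
Proof.
move=> Aa sz_rows fE gE; rewrite /minorf sz_rows; apply: det_detf => i j.
by rewrite mxE Aa fE gE.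
Qed.

Lemma det_mxsub_perm {R : comNzRingType} {n} (A : 'M[R]_n) (h : 'I_n -> 'I_n) :
  injective h -> \det (mxsub h h A) = \det A.
Proof.
move=> h_inj; pose s := perm.perm h_inj.
have -> : mxsub h h A = row_perm s (col_perm s A).
  by apply/matrixP => i j; rewrite !mxE !perm.permE.
rewrite row_permE col_permE !det_mulmx !det_perm perm.odd_permV mulrCA.
by rewrite -expr2 sqrr_sign mulr1.
Qed.

Lemma det_principal_minorf {R : comNzRingType} {n} {A : 'M[R]_n} {a : nat -> nat -> R}
    (B : {set 'I_n}) :
  (forall i j, A i j = a i j) ->
  \det (principal_submx A B) = minorf a (seq_of_set B) (seq_of_set B).
Proof.
have nthE (i : 'I_#|B|) : val (enum_val i) = nth 0%N (seq_of_set B) i.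
  by rewrite /seq_of_set (nth_map (enum_default i)) // -cardE.
move=> Aa; apply: (det_mxsub_minorf _ _ _ _ Aa _ nthE nthE).
by rewrite size_map -cardE.
Qed.

Lemma sum_pminors_minorf {R : comNzRingType} {n} {A : 'M[R]_n} {a : nat -> nat -> R} k :
  (forall i j, A i j = a i j) ->
  sum_pminors A k = \sum_(s <- subseqs (iota 0 n) | size s == k) minorf a s s.
Proof.
move=> Aa; rewrite -(big_set_subseqs (fun m => m == k) (fun s => minorf a s s)).
by apply: eq_bigr => B _; apply: det_principal_minorf.
Qed.

Lemma sum_pminors_map (R S : comNzRingType) (f : {rmorphism R -> S}) n (A : 'M[R]_n) k :
  sum_pminors (map_mx f A) k = f (sum_pminors A k).
Proof.
rewrite /sum_pminors rmorph_sum; apply: eq_bigr => B _.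
by rewrite -det_map_mx; congr (\det _); apply/matrixP => i j; rewrite !mxE.
Qed.

Lemma mxrank_ge_minor {F : fieldType} {m n p} {A : 'M[F]_(m, n)}
    (f : 'I_p -> 'I_m) (g : 'I_p -> 'I_n) :
  \det (mxsub f g A) != 0 -> (p <= \rank A)%N.
Proof.
rewrite -unitfE -unitmxE => /mxrank_unit <-.
rewrite mxsubcr; apply: leq_trans (mxrankS (rowsub_sub f A)).
by rewrite -[rowsub f A]mulmx1 -mulmx_colsub mulmx1 mxrankM_maxl.
Qed.

Lemma mxrank_ge_int_minorf {F : numFieldType} {m n} {A : 'M[int]_(m, n)}
    {a : nat -> nat -> int} rows cols :
  (forall i j, A i j = a i j) -> size rows = size cols ->
  all (fun i => i < m)%N rows -> all (fun j => j < n)%N cols ->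
  minorf a rows cols != 0 -> (size rows <= \rank (map_mx intr A : 'M[F]_(m, n)))%N.
Proof.
move=> Aa sz rows_lt cols_lt nz_minor.
have rowP (i : 'I_(size rows)) : (nth 0 rows i < m)%N by apply: (all_nthP 0 rows_lt).
have colP (i : 'I_(size rows)) : (nth 0 cols i < n)%N.
  by apply: (all_nthP 0 cols_lt); rewrite -sz.
apply: (mxrank_ge_minor (fun i => Ordinal (rowP i)) (fun i => Ordinal (colP i))).
by rewrite -map_mxsub det_map_mx intr_eq0 (det_mxsub_minorf _ _ rows cols Aa).
Qed.

Lemma sjacobian_map {R S : numDomainType} (f : {rmorphism R -> S}) {M Jn}
    (N : network M Jn) (r : 'I_Jn -> 'I_M -> R) (r' : 'I_Jn -> 'I_M -> S) :
  (forall j m, r' j m = f (r j m)) -> sjacobian N r' = map_mx f (sjacobian N r).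
Proof.
move=> r'E; rewrite /sjacobian map_mxM; congr (_ *m _); apply/matrixP => i j.
  by rewrite !mxE rmorph_int.
by rewrite !mxE r'E; case: ifP; rewrite ?rmorph0.
Qed.

Lemma mulmx_eq0_iota {R : nzRingType} {p m n} {K : 'M[R]_(p, m)} {A : 'M[R]_(m, n)}
    {k a : nat -> nat -> R} :
  (forall i l, K i l = k i l) -> (forall l j, A l j = a l j) ->
  all (fun i => all (fun j => \sum_(l <- iota 0 m) k i l * a l j == 0) (iota 0 n))
      (iota 0 p) ->
  K *m A = 0.
Proof.
move=> Kk Aa /allP prods0; apply/matrixP => i j; rewrite !mxE.
rewrite (eq_bigr (fun l : 'I_m => k i l * a l j)) => [|l _]; last by rewrite Kk Aa.
rewrite (big_ord_iota (fun l => k i l * a l j)); apply/eqP.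
have iota_ord q (x : 'I_q) : val x \in iota 0 q by rewrite mem_iota ltn_ord.
by move/allP: (prods0 i (iota_ord p i)); apply; apply: iota_ord.
Qed.

(** * Child-selection triples as lists of pairs *)

Definition unstable_sign (d : int) (k : nat) : bool := Num.sg d == (-1) ^+ k.-1.

Section PairLists.
Variable s : nat -> nat -> int.

Definition cs_det (l : seq (nat * nat)) : int := minorf s (map fst l) (map snd l).

Definition unstable_positiveb (l : seq (nat * nat)) : bool :=
  [&& (0 < size l)%N, unstable_sign (cs_det l) (size l) &
      all (fun t => (0 < size t < size l)%N ==> ~~ unstable_sign (cs_det t) (size t))
          (subseqs l)].

Definition metzlerb (l : seq (nat * nat)) : bool :=
  all (fun p => all (fun q => (p == q) || (0 <= s p.1 q.2)) l) l.

Lemma unstable_positivebP l :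
  reflect [/\ (0 < size l)%N, unstable_sign (cs_det l) (size l) &
             forall t, subseq t l -> (0 < size t < size l)%N ->
               ~~ unstable_sign (cs_det t) (size t)]
          (unstable_positiveb l).
Proof.
apply: (iffP and3P) => -[l_gt0 l_sign minors].
  split=> // t sub_t t_size.
  by move/allP/(_ t): minors; rewrite mem_subseqs sub_t t_size => /(_ isT).
split=> //; apply/allP => t; rewrite mem_subseqs => /minors t_minor; exact/implyP.
Qed.

Lemma perm_cs_det {l1 l2} : perm_eq l1 l2 -> cs_det l1 = cs_det l2.
Proof.
move=> eq_l; have sz := perm_size eq_l.
case/(perm_iotaP (0, 0)%N): eq_l => Is eq_Is l1E.
have Is_lt (i : 'I_(size l2)) : (nth 0 Is i < size l2)%N.
  have : nth 0 Is i \in iota 0 (size l2).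
    by rewrite -(perm_mem eq_Is) mem_nth // (perm_size eq_Is) size_iota.
  by rewrite mem_iota.
pose h i := Ordinal (Is_lt i).
pose A := \matrix_(a < size l2, b < size l2) s (nth (0, 0) l2 a).1 (nth (0, 0) l2 b).2.
have Is_uniq : uniq Is by rewrite (perm_uniq eq_Is) iota_uniq.
have h_inj : injective h.
  move=> i j /(congr1 val) /eqP.
  rewrite /= (nth_uniq 0%N _ _ Is_uniq) ?(perm_size eq_Is) ?size_iota //.
  by move/eqP/val_inj.
have detA : \det A = cs_det l2.
  by rewrite /cs_det /minorf size_map; apply: det_detf => i j; rewrite mxE !(nth_map (0, 0)%N).
rewrite -detA -(det_mxsub_perm A _ h_inj) /cs_det /minorf size_map sz.
symmetry; apply: det_detf => i j.
by rewrite !mxE l1E -!map_comp !(nth_map 0%N) ?(perm_size eq_Is) ?size_iota.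
Qed.

Lemma perm_unstable_positiveb {l1 l2} :
  uniq l1 -> perm_eq l1 l2 -> unstable_positiveb l1 = unstable_positiveb l2.
Proof.
wlog suff: l1 l2 / uniq l1 -> perm_eq l1 l2 -> unstable_positiveb l1 -> unstable_positiveb l2.
  move=> imp l1_uniq eq_l; apply/idP/idP; first exact: imp.
  by apply: imp; rewrite 1?perm_sym // -(perm_uniq eq_l).
move=> l1_uniq eq_l /unstable_positivebP[l1_gt0 l1_sign minors].
apply/unstable_positivebP; rewrite -(perm_size eq_l) -(perm_cs_det eq_l).
split=> // t sub_t t_size.
have eq_t : perm_eq t [seq p <- l1 | p \in t].
  apply: uniq_perm; rewrite ?filter_uniq ?(subseq_uniq sub_t) -?(perm_uniq eq_l) //.
  move=> p; rewrite mem_filter (perm_mem eq_l).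
  by case pt: (p \in t); rewrite // (mem_subseq sub_t).
rewrite (perm_cs_det eq_t) (perm_size eq_t) minors ?filter_subseq //.
by rewrite -(perm_size eq_t).
Qed.

Lemma perm_metzlerb {l1 l2} : perm_eq l1 l2 -> metzlerb l1 = metzlerb l2.
Proof.
move=> /perm_mem eq_l; rewrite /metzlerb (eq_all_r eq_l).
by apply: eq_all => p; apply: eq_all_r.
Qed.

(* The first filter is implied by the second; it only spares the evaluation of
   all the principal minors of most lists. *)
Definition unstable_positive_filter (C : seq (seq (nat * nat))) : seq (seq (nat * nat)) :=
  [seq l <- [seq l <- C | unstable_sign (cs_det l) (size l)] | unstable_positiveb l].

Lemma mem_unstable_positive_filter C l :
  (l \in unstable_positive_filter C) = (l \in C) && unstable_positiveb l.
Proof.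
rewrite 2!mem_filter; apply/and3P/andP => [[upos _ l_C] | [l_C upos]]; first by split.
by split=> //; case/and3P: upos.
Qed.

End PairLists.

Section Candidates.
Variables (Jn : nat) (reac : nat -> seq nat).

Fixpoint choices (rs : seq nat) : seq (seq (nat * nat)) :=
  if rs is r :: rs' then [seq (m, r) :: t | m <- reac r, t <- choices rs'] else [:: [::]].

Lemma mem_choices rs l :
  (l \in choices rs) = (map snd l == rs) && all (fun p => p.1 \in reac p.2) l.
Proof.
elim: rs l => [|r rs IH] [|[m j] l] //=; first by apply/allpairsP => -[? []].
rewrite eqseq_cons -andbA; apply/allpairsP/and4P => [[[m' t] /= [m'r]]|[/eqP-> rsE mr al]].
  by rewrite IH => /andP[/eqP<- al] [-> -> ->]; rewrite !eqxx m'r al.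
by exists (m, l); rewrite IH rsE al mr.
Qed.

Definition cs_candidates : seq (seq (nat * nat)) :=
  [seq l <- flatten [seq choices rs | rs <- subseqs (iota 0 Jn)] | uniq (map fst l)].

Lemma mem_cs_candidates l :
  (l \in cs_candidates) =
  [&& uniq (map fst l), subseq (map snd l) (iota 0 Jn) & all (fun p => p.1 \in reac p.2) l].
Proof.
rewrite mem_filter; congr andb; apply/flattenP/andP => [[_ /mapP[rs rs_sub ->]]|[sub al]].
  by rewrite mem_choices mem_subseqs in rs_sub * => /andP[/eqP-> al].
exists (choices (map snd l)); first by apply: map_f; rewrite mem_subseqs.
by rewrite mem_choices eqxx.
Qed.

End Candidates.

Definition cs_pairs {M Jn k} (kap : 'I_k -> 'I_M) (Jf : 'I_k -> 'I_Jn) : seq (nat * nat) :=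
  [seq (val (kap i), val (Jf i)) | i <- enum 'I_k].

(* A motif is represented by the increasing lists of its species and of its
   reaction indices. *)
Definition cs_key (M Jn : nat) (l : seq (nat * nat)) : seq nat * seq nat :=
  ([seq m <- iota 0 M | m \in map fst l], [seq j <- iota 0 Jn | j \in map snd l]).

Definition key_motif (M Jn : nat) (key : seq nat * seq nat) : {set 'I_M} * {set 'I_Jn} :=
  (set_of_seq M key.1, set_of_seq Jn key.2).

Section ChildSelection.
Context {M Jn : nat} {N : network M Jn} {s : nat -> nat -> int} {reac : nat -> seq nat}.
Hypothesis stoichE : forall (m : 'I_M) (j : 'I_Jn), stoich N m j = s m j.
Hypothesis reactantE : forall (m : 'I_M) (j : 'I_Jn), reactant N m j = (val m \in reac j).
Hypothesis reac_lt : forall j, all (fun m => m < M)%N (reac j).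

Section Triple.
Context {k : nat} {kap : 'I_k -> 'I_M} {Jf : 'I_k -> 'I_Jn}.
Let pair_of i := (val (kap i), val (Jf i)).

Lemma size_cs_pairs : size (cs_pairs kap Jf) = k.
Proof. by rewrite size_map size_enum_ord. Qed.

Lemma nth_cs_pairs (i : 'I_k) : nth (0, 0)%N (cs_pairs kap Jf) i = pair_of i.
Proof. by rewrite (nth_map i) ?size_enum_ord ?nth_ord_enum. Qed.

Lemma det_cs_matrix : \det (cs_matrix N kap Jf) = cs_det s (cs_pairs kap Jf).
Proof.
rewrite /cs_det /minorf size_map size_cs_pairs; apply: det_detf => i j.
by rewrite mxE stoichE !(nth_map (0, 0)%N) ?size_cs_pairs // !nth_cs_pairs.
Qed.

Lemma det_cs_principal (B : {set 'I_k}) :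
  \det (principal_submx (cs_matrix N kap Jf) B) = cs_det s [seq pair_of i | i <- enum B].
Proof.
rewrite /cs_det /minorf !size_map -cardE; apply: det_detf => i j.
rewrite 2!mxE stoichE !(nth_map (0, 0)%N) ?size_map -?cardE //.
by rewrite !(nth_map (enum_default i)) -?cardE // -!enum_val_nth.
Qed.

Hypothesis Jf_inj : injective Jf.

Lemma pair_of_inj : injective pair_of.
Proof. by move=> i j [_ /val_inj /Jf_inj]. Qed.

Lemma cs_pairs_uniq : uniq (cs_pairs kap Jf).
Proof. by rewrite map_inj_uniq ?enum_uniq //; apply: pair_of_inj. Qed.

Lemma unstable_positiveP :
  unstable_positive (cs_matrix N kap Jf) <-> unstable_positiveb s (cs_pairs kap Jf).
Proof.
have enumE (B : {set 'I_k}) : enum B = [seq i <- enum 'I_k | i \in B] by rewrite enumT.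
rewrite /unstable_positive det_cs_matrix; split.
  case=> k_gt0 [k_sign minors]; apply/unstable_positivebP.
  rewrite size_cs_pairs; split=> //; first exact/eqP.
  move=> t sub_t t_size.
  pose B := [set i | pair_of i \in t].
  have tE : [seq pair_of i | i <- enum B] = t.
    rewrite enumE (eq_filter (a2 := preim pair_of (mem t))) => [|i]; last by rewrite inE.
    by rewrite -filter_map; apply/esym/subseq_uniqP/sub_t/cs_pairs_uniq.
  have cardB : #|B| = size t by rewrite cardE -(size_map pair_of) tE.
  by move: (minors B); rewrite det_cs_principal tE cardB t_size => /(_ isT).
case/unstable_positivebP; rewrite size_cs_pairs => k_gt0 k_sign minors.
split=> //; split; first exact/eqP.
move=> B B_size; rewrite det_cs_principal.
have sub_B : subseq [seq pair_of i | i <- enum B] (cs_pairs kap Jf).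
  by rewrite enumE map_subseq ?filter_subseq.
by have := minors _ sub_B; rewrite size_map -cardE B_size => /(_ isT).
Qed.

Lemma metzlerP : metzler (cs_matrix N kap Jf) <-> metzlerb s (cs_pairs kap Jf).
Proof.
split=> [metz | /allP metz i j ij].
  apply/allP => _ /mapP[i _ ->]; apply/allP => _ /mapP[j _ ->].
  case: (eqVneq i j) => [->|ij]; first by rewrite eqxx.
  by move: (metz i j ij); rewrite mxE stoichE => ->; rewrite orbT.
move: (metz _ (map_f pair_of (mem_enum _ i))) => /allP /(_ _ (map_f pair_of (mem_enum _ j))).
by rewrite (inj_eq pair_of_inj) (negbTE ij) mxE stoichE.
Qed.

End Triple.

Lemma perm_cs_key {l1 l2} : perm_eq l1 l2 -> cs_key M Jn l1 = cs_key M Jn l2.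
Proof.
by move=> eq_l; congr pair; apply: eq_filter => x; apply/perm_mem/perm_map.
Qed.

Lemma motif_cs_key k (kap : 'I_k -> 'I_M) (Jf : 'I_k -> 'I_Jn) :
  motif kap Jf = key_motif M Jn (cs_key M Jn (cs_pairs kap Jf)).
Proof.
congr pair; apply/setP => x; rewrite inE mem_filter mem_iota leq0n add0n ltn_ord !andbT;
  apply/imsetP/mapP => [[i _ ->]|[_ /mapP[i _ ->] /val_inj->]];
  by [exists (val (kap i), val (Jf i)); rewrite ?map_f ?mem_enum | exists i].
Qed.

Lemma cs_pairs_candidate {k} {kap : 'I_k -> 'I_M} {Jf : 'I_k -> 'I_Jn} :
  is_cs N kap Jf -> exists2 l, l \in cs_candidates Jn reac & perm_eq (cs_pairs kap Jf) l.
Proof.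
case=> kap_inj [Jf_inj reactive].
pose by_reaction (p q : nat * nat) := (p.2 <= q.2)%N.
exists (sort by_reaction (cs_pairs kap Jf)); last by rewrite perm_sym perm_sort.
have eq_l : perm_eq (sort by_reaction (cs_pairs kap Jf)) (cs_pairs kap Jf).
  by rewrite perm_sort.
rewrite mem_cs_candidates (perm_all _ eq_l) (perm_uniq (perm_map _ eq_l)).
rewrite (@map_sort _ _ snd by_reaction leq) //; apply/and3P; split.
- by rewrite -map_comp map_inj_uniq ?enum_uniq // => i j /val_inj /kap_inj.
- apply: sort_subseq_iota.
    by rewrite -map_comp map_inj_uniq ?enum_uniq // => i j /val_inj /Jf_inj.
  by apply/allP => _ /mapP[_ /mapP[i _ ->] ->]; apply: ltn_ord.
- by apply/allP => _ /mapP[i _ ->]; rewrite /= -reactantE.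
Qed.

Lemma candidate_cs_pairs {l} : l \in cs_candidates Jn reac ->
  exists (kap : 'I_(size l) -> 'I_M) (Jf : 'I_(size l) -> 'I_Jn),
    is_cs N kap Jf /\ cs_pairs kap Jf = l.
Proof.
rewrite mem_cs_candidates => /and3P[fst_uniq sub_snd reactive].
have snd_uniq : uniq (map snd l) := subseq_uniq sub_snd (iota_uniq 0 Jn).
have reactive_nth (i : 'I_(size l)) : (nth (0, 0) l i).1 \in reac (nth (0, 0) l i).2.
  exact: (all_nthP (0, 0)%N reactive).
have fst_lt (i : 'I_(size l)) : ((nth (0, 0) l i).1 < M)%N.
  exact: allP (reac_lt _) _ (reactive_nth i).
have snd_lt (i : 'I_(size l)) : ((nth (0, 0) l i).2 < Jn)%N.
  have : (nth (0, 0) l i).2 \in iota 0 Jn.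
    by rewrite (mem_subseq sub_snd) // -(nth_map _ 0%N) ?mem_nth ?size_map.
  by rewrite mem_iota.
pose kap i := Ordinal (fst_lt i); pose Jf i := Ordinal (snd_lt i).
have nth_inj (f : nat * nat -> nat) : uniq (map f l) ->
    forall i j : 'I_(size l), f (nth (0, 0) l i) = f (nth (0, 0) l j) -> i = j.
  move=> f_uniq i j eq_ij; apply/val_inj/eqP.
  rewrite -(nth_uniq 0%N _ _ f_uniq) ?size_map ?ltn_ord //.
  by rewrite !(nth_map (0, 0)%N) ?eq_ij ?ltn_ord.
exists kap, Jf; split; first split.
- by move=> i j /(congr1 val) /(nth_inj _ fst_uniq).
- split; first by move=> i j /(congr1 val) /(nth_inj _ snd_uniq).
  by move=> i; rewrite reactantE; apply: reactive_nth.
- apply: (@eq_from_nth _ (0, 0)%N); rewrite size_cs_pairs // => i i_lt.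
  by rewrite -[i]/(val (Ordinal i_lt)) nth_cs_pairs /=; case: (nth _ l i).
Qed.
End ChildSelection.

(** * The network (BI)+(BII) *)

Definition notch_stoich (m j : nat) : int :=
  (count_mem m (nth [::] bn_prod j))%:Z - (count_mem m (nth [::] bn_reac j))%:Z.

Definition notch_reac (j : nat) : seq nat := nth [::] bn_reac j.

Lemma notch_stoichE (m : 'I_12) (j : 'I_10) : stoich notch_net m j = notch_stoich m j.
Proof. by rewrite mxE. Qed.

Lemma notch_reactantE (m : 'I_12) (j : 'I_10) :
  reactant notch_net m j = (val m \in notch_reac j).
Proof. by rewrite /reactant /= -has_count has_pred1. Qed.

Lemma notch_reac_lt j : all (fun m => m < 12)%N (notch_reac j).
Proof.
have [j_lt|j_ge] := ltnP j (size bn_reac); last by rewrite /notch_reac nth_default.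
have bn_reac_lt : all (all (fun m => m < 12)%N) bn_reac by [].
exact: (allP bn_reac_lt) (mem_nth [::] j_lt).
Qed.

(* Supports of five independent conservation laws [\sum_(m in s) x_m]. *)
Definition notch_laws : seq (seq nat) :=
  [:: [:: 1; 2; 5]; [:: 3; 4; 5]; [:: 7; 8; 11]; [:: 9; 10; 11];
      [:: 0; 2; 4; 5; 6; 8; 10; 11]]%N.

Definition law_coef (i m : nat) : int := (m \in nth [::] notch_laws i)%:R.

Lemma notch_cons_dim (F : numFieldType) : cons_dim F notch_net = 5%N.
Proof.
rewrite /cons_dim mxrank_ker.
set S : 'M[F]_(12, 10) := map_mx intr (stoich notch_net).
have rank_ge7 : (7 <= \rank S)%N.
  by apply: (mxrank_ge_int_minorf [:: 0; 1; 2; 3; 6; 7; 8]%N [:: 0; 1; 2; 3; 5; 6; 8]%N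
               notch_stoichE); vm_compute.
pose K : 'M[int]_(5, 12) := \matrix_(i, m) law_coef i m.
have KE i m : K i m = law_coef i m by rewrite mxE.
have laws0 : K *m stoich notch_net = 0.
  by apply: (mulmx_eq0_iota KE notch_stoichE); rewrite unlock; vm_compute.
have lawsF : map_mx intr K *m S = 0 by rewrite -map_mxM laws0 map_mx0.
have rank_ker_ge5 : (5 <= \rank (kermx S))%N.
  apply: leq_trans (mxrankS (introT sub_kermxP lawsF)).
  by apply: (mxrank_ge_int_minorf [:: 0; 1; 2; 3; 4]%N [:: 1; 3; 7; 9; 0]%N KE); vm_compute.
rewrite mxrank_ker in rank_ker_ge5; apply/eqP; rewrite eqn_leq rank_ker_ge5 andbT.
by rewrite leq_subLR; apply: (leq_add rank_ge7 (leqnn 5)).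
Qed.

(* [rate_table k t] is the derivative of reaction [k.+1] of either cell with
   respect to its reactant of type [t]; rates depending only on such
   cell-independent data are kinetically symmetric. Entries at non-reactants
   are never used. *)
Definition rate_table (k t : nat) : nat :=
  match k, t with
  | 0, 0 => 18 | 0, 1 => 5
  | 1, 2 => 18 | 1, 3 => 90
  | 2, 4 => 18
  | 3, 2 => 90 | 3, 3 => 18
  | 4, 5 => 18
  | _, _ => 1
  end%N.

Definition notch_rates (R : numDomainType) (j : 'I_10) (m : 'I_12) : R :=
  (rate_table (j %% 5) (m %% 6))%:R.

Lemma rate_table_gt0 k t : (0 < rate_table k t)%N.
Proof. by case: k t => [|[|[|[|[|k]]]]] [|[|[|[|[|[|t]]]]]]. Qed.

(* The Jacobian is evaluated in the binary integers [Z]; [notch_capacity]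
   transfers the result to [R] along the ring morphism [Z -> int -> R]. *)
Definition notch_jacobian_term (i m j : nat) : BinNums.Z :=
  (notch_stoich i j)%:~R *
  (if m \in notch_reac j then (rate_table (j %% 5) (m %% 6))%:R else 0).

Definition notch_jacobian_entry (i m : nat) : BinNums.Z :=
  \sum_(j <- iota 0 10) notch_jacobian_term i m j.

Lemma notch_sjacobianE (i m : 'I_12) :
  sjacobian notch_net (notch_rates BinNums.Z) i m = notch_jacobian_entry i m.
Proof.
rewrite mxE; under eq_bigr => j _ do rewrite !mxE notch_reactantE.
exact: (big_ord_iota (notch_jacobian_term i m)).
Qed.

Lemma notch_a7 : sum_pminors (sjacobian notch_net (notch_rates BinNums.Z)) 7 = 0.
Proof.
rewrite (sum_pminors_minorf 7 notch_sjacobianE) /notch_jacobian_entry -big_filter !unlock.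
vm_compute; reflexivity.
Qed.

Lemma notch_capacity (R : realType) : capacity_zero_eig R notch_net swap_sp swap_rx.
Proof.
exists (notch_rates R); split; [|split].
- by move=> j m _; rewrite ltr0n rate_table_gt0.
- move=> j m _; rewrite /notch_rates /swap_rx /swap_sp !inordK ?ltn_pmod //.
  by rewrite !modn_dvdm // !modnDr.
pose phi : {rmorphism BinNums.Z -> R} := (intr \o int_of_Z)%FUN.
rewrite /a_coef notch_cons_dim (sjacobian_map phi notch_net (notch_rates BinNums.Z)) => [|j m].
  by rewrite sum_pminors_map notch_a7 rmorph0.
by rewrite /notch_rates rmorph_nat.
Qed.

Definition notch_keys : seq (seq nat * seq nat) :=
  [:: ([:: 1; 2; 3; 8; 9], [:: 0; 1; 3; 6; 8]);
      ([:: 2; 3; 4; 8; 9], [:: 1; 2; 3; 6; 8]);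
      ([:: 1; 2; 3; 6; 8; 10], [:: 0; 1; 3; 5; 6; 7]);
      ([:: 2; 3; 7; 8; 9], [:: 1; 3; 5; 6; 8]);
      ([:: 2; 3; 8; 9; 10], [:: 1; 3; 6; 7; 8]);
      ([:: 0; 2; 4; 7; 8; 9], [:: 0; 1; 2; 5; 6; 8])]%N.

Lemma notch_motifsE : notch_motifs = map (key_motif 12 10) notch_keys.
Proof.
rewrite /notch_motifs /motif_a /motif_b /motif_c /sp /rx /=.
congr [:: _; _; _; _; _; _]; congr pair; apply/setP => x;
  rewrite !inE -!val_eqE /= !inordK //; move: (val x) => m;
  by do 12?case: m => [|m].
Qed.

Lemma notch_motifs_uniq : uniq notch_motifs.
Proof.
rewrite notch_motifsE; apply: (@map_uniq _ _ (fun mo => (seq_of_set mo.1, seq_of_set mo.2))).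
rewrite -map_comp.
by rewrite (eq_map (fun key => congr2 pair (set_of_seqK 12 key.1) (set_of_seqK 10 key.2))).
Qed.

Definition notch_candidates : seq (seq (nat * nat)) := cs_candidates 10 notch_reac.

Definition notch_unstable : seq (seq (nat * nat)) :=
  unstable_positive_filter notch_stoich notch_candidates.

Lemma notch_unstable_check :
  perm_eq (map (cs_key 12 10) notch_unstable) notch_keys &&
  all (fun l => ~~ metzlerb notch_stoich l) notch_unstable.
Proof. by vm_compute. Qed.

Lemma notch_unstable_motif {k} {kap : 'I_k -> 'I_12} {Jf : 'I_k -> 'I_10} :
  is_cs notch_net kap Jf -> unstable_positive (cs_matrix notch_net kap Jf) ->
  motif kap Jf \in notch_motifs /\ ~ metzler (cs_matrix notch_net kap Jf).
Proof.
move=> cs /(unstable_positiveP notch_stoichE cs.2.1) upos.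
have [l l_cand eq_l] := cs_pairs_candidate notch_reactantE cs.
have l_unstable : l \in notch_unstable.
  rewrite mem_unstable_positive_filter l_cand.
  by rewrite -(perm_unstable_positiveb _ (cs_pairs_uniq cs.2.1) eq_l).
case/andP: notch_unstable_check => /perm_mem keysE /allP not_metz.
have key_l : cs_key 12 10 l \in notch_keys by rewrite -keysE; apply: map_f.
split; first by rewrite motif_cs_key (perm_cs_key eq_l) notch_motifsE; apply: map_f.
move/(metzlerP notch_stoichE cs.2.1).
by rewrite (perm_metzlerb _ eq_l) (negbTE (not_metz l l_unstable)).
Qed.

Lemma notch_motif_realized mo : mo \in notch_motifs ->
  exists (k : nat) (kap : 'I_k -> 'I_12) (Jf : 'I_k -> 'I_10),
    [/\ is_cs notch_net kap Jf, unstable_positive (cs_matrix notch_net kap Jf)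
      & motif kap Jf = mo].
Proof.
rewrite notch_motifsE => /mapP[key].
case/andP: notch_unstable_check => /perm_mem <- _ /mapP[l].
rewrite mem_unstable_positive_filter => /andP[l_cand upos] -> ->.
have [kap [Jf [cs lE]]] := candidate_cs_pairs notch_reactantE notch_reac_lt l_cand.
exists (size l), kap, Jf; split=> //; last by rewrite motif_cs_key lE.
by apply/(unstable_positiveP notch_stoichE cs.2.1); rewrite lE.
Qed.

Theorem theorem3p2 (R : realType) :
  capacity_zero_eig R notch_net swap_sp swap_rx /\
  uniq notch_motifs /\
  (forall (k : nat) (kap : 'I_k -> 'I_12) (Jf : 'I_k -> 'I_10),
     is_cs notch_net kap Jf -> unstable_positive (cs_matrix notch_net kap Jf) ->
     motif kap Jf \in notch_motifs) /\
  (forall mo, mo \in notch_motifs ->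
     exists (k : nat) (kap : 'I_k -> 'I_12) (Jf : 'I_k -> 'I_10),
       [/\ is_cs notch_net kap Jf, unstable_positive (cs_matrix notch_net kap Jf)
         & motif kap Jf = mo]) /\
  (forall (k : nat) (kap : 'I_k -> 'I_12) (Jf : 'I_k -> 'I_10),
     is_cs notch_net kap Jf -> unstable_positive (cs_matrix notch_net kap Jf) ->
     motif kap Jf \in notch_motifs -> ~ metzler (cs_matrix notch_net kap Jf)) /\
  ~ autocatalytic_network notch_net.
Proof.
split; first exact: notch_capacity.
split; first exact: notch_motifs_uniq.
split; first by move=> k kap Jf cs upos; case: (notch_unstable_motif cs upos).
split; first exact: notch_motif_realized.
split; first by move=> k kap Jf cs upos _; case: (notch_unstable_motif cs upos).
by case=> k [kap [Jf [cs [upos metz]]]]; case: (notch_unstable_motif cs upos).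
Qed.
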